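(* Let $L$ be a semiprime right Leibniz algebra. Then $\mathrm{Ann}(L)=\mathrm{ran}(L)=\{0\}$.
   Context: A right Leibniz algebra satisfies $[x,[y,z]]=[[x,y],z]-[[x,z],y]$. Ideals: subspaces $I$ with $[I,L]\subseteq I$, $[L,I]\subseteq I$. $L$ is semiprime if $[I,I]\ne\{0\}$ for every nonzero ideal $I$. $\mathrm{ran}(L)=\{x\in L:[y,x]=0\ \forall y\in L\}$, $\mathrm{lan}(L)=\{x\in L:[x,y]=0\ \forall y\in L\}$, $\mathrm{Ann}(L)=\mathrm{lan}(L)\cap\mathrm{ran}(L)$. *)

From mathcomp Require Import all_boot all_algebra.
Set Implicit Arguments. Unset Strict Implicit. Unset Printing Implicit Defensive.
Import GRing.Theory.
Local Open Scope ring_scope.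

Definition bilinear_bracket (F : fieldType) (L : lmodType F) (br : L -> L -> L) :=
  [/\ forall a x y z, br (a *: x + y) z = a *: br x z + br y z
    & forall a x y z, br x (a *: y + z) = a *: br x y + br x z].

Definition right_leibniz_identity (F : fieldType) (L : lmodType F) (br : L -> L -> L) :=
  forall x y z, br x (br y z) = br (br x y) z - br (br x z) y.

Definition right_leibniz_algebra (F : fieldType) (L : lmodType F) (br : L -> L -> L) :=
  bilinear_bracket br /\ right_leibniz_identity br.

Definition subspace (F : fieldType) (L : lmodType F) (I : L -> Prop) :=
  [/\ I 0, forall x y, I x -> I y -> I (x + y) & forall a x, I x -> I (a *: x)].

Definition ideal (F : fieldType) (L : lmodType F) (br : L -> L -> L) (I : L -> Prop) :=
  [/\ subspace I, forall x y, I x -> I (br x y) & forall x y, I y -> I (br x y)].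

(* L is semiprime: [I,I] <> {0} for every nonzero ideal I.
   ([I,I] is the span of the products; it is nonzero iff some product is nonzero.) *)
Definition semiprime (F : fieldType) (L : lmodType F) (br : L -> L -> L) :=
  forall I : L -> Prop, ideal br I -> (exists x, I x /\ x <> 0) ->
    exists x y, I x /\ I y /\ br x y <> 0.

Definition ran (F : fieldType) (L : lmodType F) (br : L -> L -> L) (x : L) : Prop :=
  forall y, br y x = 0.
Definition lan (F : fieldType) (L : lmodType F) (br : L -> L -> L) (x : L) : Prop :=
  forall y, br x y = 0.
Definition Ann (F : fieldType) (L : lmodType F) (br : L -> L -> L) (x : L) : Prop :=
  lan br x /\ ran br x.

From mathcomp Require Import all_boot all_algebra.
Set Implicit Arguments. Unset Strict Implicit. Unset Printing Implicit Defensive.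
Local Open Scope ring_scope.
Import GRing.Theory.

(* The right Leibniz identity makes ran(L) a two-sided ideal, and [ran(L), ran(L)] = 0
   by definition of ran; semiprimeness then forces ran(L) = 0, and Ann(L) is contained
   in ran(L). *)

Section RightAnnihilator.

Variables (F : fieldType) (L : lmodType F) (br : L -> L -> L).
Hypothesis br_bilinear : bilinear_bracket br.

Lemma bracket0l (z : L) : br 0 z = 0.
Proof.
have [linl _] := br_bilinear.
have := linl 1 0 0 z; rewrite !scale1r addr0 => h.
by apply: (addrI (br 0 z)); rewrite addr0 -h.
Qed.

Lemma bracket0r (z : L) : br z 0 = 0.
Proof.
have [_ linr] := br_bilinear.
have := linr 1 z 0 0; rewrite !scale1r addr0 => h.
by apply: (addrI (br z 0)); rewrite addr0 -h.
Qed.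

Lemma ran0 : ran br 0.
Proof. by move=> y; apply: bracket0r. Qed.

Lemma Ann0 : Ann br 0.
Proof. by split=> y; [apply: bracket0l | apply: bracket0r]. Qed.

Lemma ran_subspace : subspace (ran br).
Proof.
have [_ linr] := br_bilinear.
split; first exact: ran0.
- by move=> x y Hx Hy z; rewrite -[x]scale1r linr Hx Hy scaler0 addr0.
- move=> a x Hx z; rewrite -[a *: x]addr0 linr Hx.
  by rewrite bracket0r scaler0 addr0.
Qed.

Lemma ran_ideal : right_leibniz_identity br -> ideal br (ran br).
Proof.
move=> leibniz; split; first exact: ran_subspace.
- by move=> x y Hx z; rewrite leibniz Hx bracket0l Hx subr0.
- by move=> x y Hy z; rewrite Hy bracket0r.
Qed.

Lemma semiprime_ideal_in_ran_eq0 (I : L -> Prop) (x : L) :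
  semiprime br -> ideal br I -> (forall y, I y -> ran br y) -> I x -> x = 0.
Proof.
move=> sp idI Iran Ix; apply/eqP/negPn/negP => /eqP x_neq0.
have [a [b [_ [Ib ab_neq0]]]] := sp I idI (ex_intro _ x (conj Ix x_neq0)).
by apply: ab_neq0; apply: Iran.
Qed.

End RightAnnihilator.

Theorem proposition2p6 (F : fieldType) (L : lmodType F) (br : L -> L -> L) :
  right_leibniz_algebra br -> semiprime br ->
  (forall x : L, Ann br x <-> x = 0) /\ (forall x : L, ran br x <-> x = 0).
Proof.
move=> [bil leibniz] sp.
have ran_eq0 x : ran br x <-> x = 0.
  split=> [|->]; last exact: ran0.
  exact: semiprime_ideal_in_ran_eq0 sp (ran_ideal bil leibniz) (fun _ => id).
split=> // x; split=> [[_ /ran_eq0] //|->].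
exact: Ann0.
Qed.
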